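(* Let $R_1$ and $R_2$ be finite commutative principal ideal rings with unity, and let $R=R_1\times R_2$. Suppose $\operatorname{diam}(\Gamma(R_1))=\operatorname{diam}(\Gamma(R_2))=0$. Then $\overline{\Gamma(R)}$ is a divisor graph if and only if at least one of $R_1$ and $R_2$ is an integral domain.
   Context: For a commutative ring $S$ with unity, $Z(S)$ denotes its set of zero divisors. The zero divisor graph $\Gamma(S)$ is the simple graph with vertex set $Z(S)\setminus\{0\}$, distinct $a,b$ adjacent iff $ab=0$; its complement $\overline{\Gamma(S)}$ has the same vertex set with distinct $a,b$ adjacent iff $ab\neq 0$. The diameter of a graph is the maximum distance (number of edges in a shortest path) between pairs of vertices. In the paper's usage, $\operatorname{diam}(\Gamma(S))=0$ means $\Gamma(S)$ has at most one vertex, i.e. $S$ has at most one nonzero zero divisor (this includes the case that $S$ is an integral domain). For a nonempty set $T$ of positive integers, the divisor graph $G(T)$ has vertex set $T$, with distinct $i,j$ adjacent iff $i\mid j$ or $j\mid i$; a graph is a divisor graph if it is isomorphic to some $G(T)$. *)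

From HB Require Import structures.
From mathcomp Require Import all_boot all_order all_algebra.
Set Implicit Arguments. Unset Strict Implicit. Unset Printing Implicit Defensive.
Import GRing.Theory.
Local Open Scope ring_scope.

Definition is_ideal (R : comNzRingType) (I : R -> Prop) : Prop :=
  [/\ I 0, (forall x y, I x -> I y -> I (x + y)) & (forall r x, I x -> I (r * x))].

Definition is_principal (R : comNzRingType) (I : R -> Prop) : Prop :=
  exists a : R, forall x, I x <-> exists r : R, x = r * a.

Definition principal_ideal_ring (R : comNzRingType) : Prop :=
  forall I : R -> Prop, is_ideal I -> is_principal I.

Definition zero_divisor (R : comNzRingType) (a : R) : Prop :=
  exists b : R, b != 0 /\ a * b = 0.

Definition zdg_vertex (R : comNzRingType) (a : R) : Prop :=
  zero_divisor a /\ a != 0.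

(* diam(Gamma(S)) = 0 : at most one vertex *)
Definition zdg_diam0 (R : comNzRingType) : Prop :=
  forall a b : R, zdg_vertex a -> zdg_vertex b -> a = b.

Definition zdg_compl_adj (R : comNzRingType) (a b : R) : Prop :=
  a <> b /\ a * b <> 0.

Definition integral_domain (R : comNzRingType) : Prop :=
  forall a b : R, a * b = 0 -> a = 0 \/ b = 0.

(* A graph with vertex set V (a predicate on T) and adjacency adj is a divisor
   graph if it is isomorphic to G(S) for some nonempty set S of positive
   integers: an injection f of V onto S with u ~ v iff f u | f v or f v | f u. *)
Definition divisor_graph (T : Type) (V : T -> Prop) (adj : T -> T -> Prop) : Prop :=
  (exists v, V v) /\
  exists f : T -> nat,
    (forall u v, V u -> V v -> f u = f v -> u = v) /\
    (forall v, V v -> (0 < f v)%N) /\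
    (forall u v, V u -> V v -> u <> v ->
       (adj u v <-> ((f u %| f v) || (f v %| f u))%N)).

(* If Gamma(R_i) has at most one vertex, then R_i is a domain or has a unique
   nonzero zero divisor z_i, and z_i ^ 2 = 0.  In a divisor labelling f, the
   middle vertex of an induced path x - y - w is either a common multiple or a
   common divisor of its ends, so orienting each edge u v as "f u divides f v"
   propagates along induced paths.  If neither factor is a domain, the seven
   vertices with coordinates in {0, 1, z_1} x {0, 1, z_2} contain a closed
   chain of nine induced paths forcing some edge to point both ways.  If R_1 is
   a domain, every vertex is (a, 0), (a, z), (0, b) or (0, z) with a <> 0, b
   regular and z the nonzero zero divisor of R_2; the graph is then the
   comparability graph of the order in which the (a, 0) and the (0, b) form
   two chains below the chain of the (a, z), and (0, z) lies above the (0, b)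
   only.  Labels 2 ^ i * 3 ^ j realise this order by divisibility, and swapping
   the factors handles a domain R_2. *)

From HB Require Import structures.
From mathcomp Require Import all_boot all_order all_algebra.
From mathcomp Require Import zify.

Set Implicit Arguments.
Unset Strict Implicit.
Unset Printing Implicit Defensive.

Section DivisorLabelling.
Variables (T : Type) (V : T -> Prop) (adj : T -> T -> Prop) (f : T -> nat).
Hypothesis f_inj : forall u v, V u -> V v -> f u = f v -> u = v.
Hypothesis f_adj : forall u v, V u -> V v -> u <> v ->
  (adj u v <-> (f u %| f v) || (f v %| f u)).

Lemma adj_dvd_asym u v : V u -> V v -> u <> v -> adj u v ->
  (f u %| f v) = ~~ (f v %| f u).
Proof.
move=> Vu Vv uv /(f_adj Vu Vv uv).
case: (boolP (f u %| f v)) => [uv_dvd _ | _ /orP[// | ->]] //.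
apply/esym/negP => vu_dvd; apply: uv; apply: f_inj Vu Vv _.
by apply/eqP; rewrite eqn_dvd uv_dvd vu_dvd.
Qed.

Lemma induced_path_to_mid x y w : V x -> V y -> V w ->
  x <> y -> y <> w -> x <> w -> adj x y -> adj y w -> ~ adj x w ->
  (f x %| f y) = (f w %| f y).
Proof.
move=> Vx Vy Vw xy yw xw axy ayw naxw.
have /norP[nxw nwx] : ~~ ((f x %| f w) || (f w %| f x)).
  by apply/negP => /(f_adj Vx Vw xw).
have xy_asym := adj_dvd_asym Vx Vy xy axy.
have yw_asym := adj_dvd_asym Vy Vw yw ayw.
apply/idP/idP => [xy_dvd | wy_dvd].
- apply: contraR nxw => /negbTE wy_ndvd.
  by apply: dvdn_trans xy_dvd _; rewrite yw_asym wy_ndvd.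
- apply: contraR nwx => /negbTE xy_ndvd.
  by apply: dvdn_trans wy_dvd _; apply: negbFE; rewrite -xy_asym.
Qed.

Lemma induced_path_from_mid x y w : V x -> V y -> V w ->
  x <> y -> y <> w -> x <> w -> adj x y -> adj y w -> ~ adj x w ->
  (f y %| f x) = (f y %| f w).
Proof.
move=> Vx Vy Vw xy yw xw axy ayw naxw.
rewrite (adj_dvd_asym Vy Vw yw ayw).
rewrite -(induced_path_to_mid Vx Vy Vw xy yw xw axy ayw naxw).
by rewrite (adj_dvd_asym Vx Vy xy axy) negbK.
Qed.

End DivisorLabelling.

Lemma divisor_graph_pullback (T T' : Type) (V : T -> Prop) (V' : T' -> Prop)
    (adj : T -> T -> Prop) (adj' : T' -> T' -> Prop) (g : T -> T') :
  (exists x, V x) -> (forall x, V x -> V' (g x)) ->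
  (forall x y, V x -> V y -> g x = g y -> x = y) ->
  (forall x y, V x -> V y -> adj' (g x) (g y) <-> adj x y) ->
  divisor_graph V' adj' -> divisor_graph V adj.
Proof.
move=> V_ne gV g_inj g_adj [_ [f [f_inj [f_gt0 f_adj]]]].
split=> //; exists (f \o g); split; [|split] => [x y Vx Vy | x Vx | x y Vx Vy xy] /=.
- by move/(f_inj _ _ (gV _ Vx) (gV _ Vy)); apply: g_inj.
- exact/f_gt0/gV.
- rewrite -g_adj //; apply: f_adj; try exact: gV.
  by move/(g_inj _ _ Vx Vy).
Qed.

Definition pow23 (e : nat * nat) : nat := 2 ^ e.1 * 3 ^ e.2.

Lemma pow23_gt0 e : 0 < pow23 e.
Proof. by rewrite muln_gt0 !expn_gt0. Qed.

Lemma logn2_pow23 e : logn 2 (pow23 e) = e.1.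
Proof. by rewrite lognM ?expn_gt0 // !lognX !logn_prime //= muln1 muln0 ?addn0. Qed.

Lemma logn3_pow23 e : logn 3 (pow23 e) = e.2.
Proof. by rewrite lognM ?expn_gt0 // !lognX !logn_prime //= muln1 muln0 ?addn0. Qed.

Lemma pow23_inj : injective pow23.
Proof.
move=> e e' eq_pow; apply: injective_projections.
- by rewrite -logn2_pow23 eq_pow logn2_pow23.
- by rewrite -logn3_pow23 eq_pow logn3_pow23.
Qed.

Lemma dvdn_pow23 i j i' j' : (pow23 (i, j) %| pow23 (i', j')) = (i <= i') && (j <= j').
Proof.
apply/idP/andP => [dvd_pow | [le_ii' le_jj']]; last by rewrite dvdn_mul // dvdn_exp2l.
have log_le p : prime p -> logn p (pow23 (i, j)) <= logn p (pow23 (i', j')).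
  by move=> p_pr; apply: dvdn_leq_log; rewrite ?pow23_gt0.
by move: (log_le 2 isT) (log_le 3 isT); rewrite !logn2_pow23 !logn3_pow23 => -> ->.
Qed.

Import GRing.Theory.
Local Open Scope ring_scope.

Lemma zdg_compl_adjE (R : comNzRingType) (x y : R) :
  zdg_compl_adj x y <-> (x != y) && (x * y != 0).
Proof. by split=> [[/eqP-> /eqP->] | /andP[/eqP xy /eqP xy0]]. Qed.

Lemma diam0_sqr (R : comNzRingType) (b : R) :
  zdg_diam0 R -> zdg_vertex b -> b * b = 0.
Proof.
move=> diam0 Vb; have [[c [c_neq0 bc0]] b_neq0] := Vb.
have Vc : zdg_vertex c by split=> //; exists b; rewrite mulrC.
by rewrite {2}(diam0 _ _ Vb Vc).
Qed.

Lemma domain_mul_eq0 (R : comNzRingType) (a c : R) :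
  integral_domain R -> (a * c == 0) = (a == 0) || (c == 0).
Proof.
move=> dom; apply/eqP/idP => [/dom[]-> | /orP[]/eqP->];
  by rewrite ?eqxx ?orbT ?mul0r ?mulr0.
Qed.

Section Product.
Variables R1 R2 : comNzRingType.

Lemma pair_neq0 (a : R1) (b : R2) :
  ((a, b) != 0 :> R1 * R2) = (a != 0) || (b != 0).
Proof. by rewrite -[0 : R1 * R2]/(0, 0) xpair_eqE negb_and. Qed.

Lemma pair_mul_neq0 (a c : R1) (b d : R2) :
  ((a, b) * (c, d) != 0 :> R1 * R2) = (a * c != 0) || (b * d != 0).
Proof. exact: pair_neq0. Qed.

Lemma zdg_vertex_10 : zdg_vertex ((1, 0) : R1 * R2).
Proof.
split; last by rewrite pair_neq0 oner_eq0.
exists (0, 1); rewrite pair_neq0 oner_eq0 orbT.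
by split=> //; congr pair; rewrite /= ?mulr0 ?mul0r.
Qed.

End Product.

Section InjectiveMultiplicative.
Variables (R S : comNzRingType) (phi : R -> S).
Hypotheses (phi0 : phi 0 = 0) (phiM : {morph phi : x y / x * y}).
Hypothesis phi_inj : injective phi.

Lemma inj_morph_eq0 x : (phi x == 0) = (x == 0).
Proof. by rewrite -phi0 (inj_eq phi_inj). Qed.

Lemma zdg_vertex_inj_morph x : zdg_vertex x -> zdg_vertex (phi x).
Proof.
case=> [[b [b_neq0 xb0]] x_neq0]; rewrite /zdg_vertex /zero_divisor inj_morph_eq0.
by split=> //; exists (phi b); rewrite inj_morph_eq0 -phiM xb0.
Qed.

Lemma zdg_compl_adj_inj_morph x y :
  zdg_compl_adj (phi x) (phi y) <-> zdg_compl_adj x y.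
Proof. by rewrite !zdg_compl_adjE -phiM inj_morph_eq0 (inj_eq phi_inj). Qed.

End InjectiveMultiplicative.

Lemma divisor_graph_swap (R1 R2 : comNzRingType) :
  divisor_graph (@zdg_vertex (R2 * R1)%type) (@zdg_compl_adj (R2 * R1)%type) ->
  divisor_graph (@zdg_vertex (R1 * R2)%type) (@zdg_compl_adj (R1 * R2)%type).
Proof.
pose swap (x : R1 * R2) : R2 * R1 := (x.2, x.1).
have swap0 : swap 0 = 0 by [].
have swapM : {morph swap : x y / x * y} by [].
have swap_inj : injective swap by case=> ? ? [? ?] [-> ->].
apply: (divisor_graph_pullback (g := swap)).
- by exists (1, 0); apply: zdg_vertex_10.
- exact: zdg_vertex_inj_morph swap0 swapM swap_inj.
- by move=> x y _ _ /swap_inj.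
- by move=> x y _ _; apply: zdg_compl_adj_inj_morph.
Qed.

Section FiniteRing.
Variable R : finComNzRingType.

Definition zdivb (b : R) : bool := (b != 0) && [exists c, (c != 0) && (b * c == 0)].

Lemma zdivbP b : reflect (zdg_vertex b) (zdivb b).
Proof.
apply: (iffP andP) => [[b_neq0 /existsP[c /andP[c_neq0 /eqP bc0]]] | Vb].
  by split=> //; exists c.
have [[c [c_neq0 bc0]] b_neq0] := Vb.
by split=> //; apply/existsP; exists c; rewrite c_neq0 bc0 eqxx.
Qed.

Hypothesis diam0 : zdg_diam0 R.

Lemma diam0_domain_or_sqr0 : integral_domain R \/ exists2 z : R, z != 0 & z * z = 0.
Proof.
have [z /zdivbP Vz | no_zdiv] := pickP zdivb.
  by right; exists z; [case: Vz | apply: diam0_sqr].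
left=> a b ab0; case: (eqVneq a 0) => [|a_neq0]; [by left | right].
apply/eqP; apply: contraFT (no_zdiv a) => b_neq0.
by apply/zdivbP; split=> //; exists b.
Qed.

Lemma diam0_zdivb_eq b c : zdivb b -> zdivb c -> b = c.
Proof. by move=> /zdivbP Vb /zdivbP Vc; apply: diam0. Qed.

Lemma diam0_mul_eq0 b c : (b * c == 0) = [|| b == 0, c == 0 | zdivb b && zdivb c].
Proof.
have [->|b_neq0] := eqVneq b 0; first by rewrite mul0r eqxx.
have [->|c_neq0] := eqVneq c 0; first by rewrite mulr0 eqxx.
apply/eqP/andP => [bc0 | [zb zc]].
  by split; apply/zdivbP; split=> //; [exists c | exists b; rewrite mulrC].
by rewrite -(diam0_zdivb_eq zb zc) diam0_sqr //; apply/zdivbP.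
Qed.

End FiniteRing.

(* A pair u of codes in {0, 1, 2} stands for an element of {0, 1, z_1} x
   {0, 1, z_2}, the code 2 standing for z_i; on such elements the complement
   of the zero-divisor graph becomes a computable relation on codes. *)
Definition code_mul (m n : nat) : nat := if m == 1 then n else if n == 1 then m else 0.

Definition code_vertex (u : nat * nat) : bool :=
  [&& u.1 < 3, u.2 < 3, u != (0, 0) & u != (1, 1)]%N.

Definition code_adj (u v : nat * nat) : bool :=
  (u != v) && ((code_mul u.1 v.1 != 0) || (code_mul u.2 v.2 != 0))%N.

Definition code_induced_path (x y w : nat * nat) : bool :=
  [&& code_vertex x, code_vertex y & code_vertex w] &&
  [&& x != w, code_adj x y, code_adj y w & ~~ code_adj x w].

Section SquareZeroCodes.
Variables (R : comNzRingType) (z : R).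
Hypotheses (z_neq0 : z != 0) (z_sq : z * z = 0).

Definition of_code (n : nat) : R := if n is 0 then 0 else if n is 1 then 1 else z.

Lemma of_codeM m n : of_code (code_mul m n) = of_code m * of_code n.
Proof. by case: m n => [|[|m]] [|[|n]]; rewrite /= ?mul0r ?mulr0 ?mul1r ?mulr1. Qed.

Lemma of_code_eq0 n : (of_code n == 0) = (n == 0)%N.
Proof. by case: n => [|[|n]]; rewrite /= ?eqxx ?oner_eq0 ?(negbTE z_neq0). Qed.

Lemma of_code_inj m n : (m < 3)%N -> (n < 3)%N -> of_code m = of_code n -> m = n.
Proof.
have z_neq1 : z != 1 by apply: contra_neq (@oner_neq0 R) => z1; rewrite -z_sq z1 mulr1.
have neqs := (oner_eq0, negbTE z_neq0, negbTE z_neq1).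
by case: m n => [|[|[|//]]] [|[|[|//]]] //= _ _ /eqP; rewrite ?neqs // eq_sym ?neqs.
Qed.

End SquareZeroCodes.

Section TwoSquareZeroFactors.
Variables (R1 R2 : comNzRingType) (z1 : R1) (z2 : R2).
Hypotheses (z1_neq0 : z1 != 0) (z1_sq : z1 * z1 = 0).
Hypotheses (z2_neq0 : z2 != 0) (z2_sq : z2 * z2 = 0).

Definition of_code2 (u : nat * nat) : R1 * R2 := (of_code z1 u.1, of_code z2 u.2).

Lemma of_code2M u v :
  of_code2 u * of_code2 v = of_code2 (code_mul u.1 v.1, code_mul u.2 v.2).
Proof. by rewrite /of_code2 /= !of_codeM. Qed.

Lemma of_code2_eq0 u : (of_code2 u == 0) = (u == (0, 0))%N.
Proof. by rewrite -[0 : R1 * R2]/(0, 0) !xpair_eqE !of_code_eq0. Qed.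

Lemma of_code2_inj u v :
  code_vertex u -> code_vertex v -> of_code2 u = of_code2 v -> u = v.
Proof.
case/and4P=> u1 u2 _ _ /and4P[v1 v2 _ _] [/of_code_inj e1 /of_code_inj e2].
by apply: injective_projections; [apply: e1 | apply: e2].
Qed.

Lemma of_code2_vertex u : code_vertex u -> zdg_vertex (of_code2 u).
Proof.
move=> Vu; split; last by rewrite of_code2_eq0; case/and4P: Vu.
pose ann (n : nat) := if n == 1%N then 0%N else 2%N.
exists (of_code2 (ann u.1, ann u.2)); rewrite of_code2M of_code2_eq0.
by case: u Vu => [[|[|[|?]]] [|[|[|?]]]].
Qed.

Lemma of_code2_adj u v : code_vertex u -> code_vertex v ->
  zdg_compl_adj (of_code2 u) (of_code2 v) <-> code_adj u v.
Proof.
move=> Vu Vv; rewrite zdg_compl_adjE of_code2M of_code2_eq0.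
have -> : (of_code2 u == of_code2 v) = (u == v).
  by apply/eqP/eqP => [/(of_code2_inj Vu Vv) | ->].
by rewrite xpair_eqE negb_and.
Qed.

Lemma of_code2_induced_path x y w : code_induced_path x y w ->
  [/\ zdg_vertex (of_code2 x), zdg_vertex (of_code2 y) & zdg_vertex (of_code2 w)] /\
  [/\ of_code2 x <> of_code2 y, of_code2 y <> of_code2 w & of_code2 x <> of_code2 w] /\
  [/\ zdg_compl_adj (of_code2 x) (of_code2 y), zdg_compl_adj (of_code2 y) (of_code2 w)
    & ~ zdg_compl_adj (of_code2 x) (of_code2 w)].
Proof.
case/andP=> /and3P[Vx Vy Vw] /and4P[xw axy ayw naxw].
have neq u v : code_vertex u -> code_vertex v -> u != v -> of_code2 u <> of_code2 v.
  by move=> Vu Vv /eqP uv /(of_code2_inj Vu Vv).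
have [xy yw] : x != y /\ y != w by case/andP: axy; case/andP: ayw.
split; first by split; apply: of_code2_vertex.
split; first by split; apply: neq.
by split; rewrite ?of_code2_adj //; apply/negP.
Qed.

Section Labelling.
Variable f : R1 * R2 -> nat.
Hypothesis f_inj : forall u v, zdg_vertex u -> zdg_vertex v -> f u = f v -> u = v.
Hypothesis f_adj : forall u v, zdg_vertex u -> zdg_vertex v -> u <> v ->
  (zdg_compl_adj u v <-> (f u %| f v) || (f v %| f u))%N.

Local Notation dvd_code u v := (f (of_code2 u) %| f (of_code2 v))%N.

Lemma code_edge_asym u v : code_vertex u -> code_vertex v -> code_adj u v ->
  dvd_code u v = ~~ dvd_code v u.
Proof.
move=> Vu Vv auv; apply: (adj_dvd_asym f_inj f_adj); try exact: of_code2_vertex.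
  by case/andP: auv => /eqP uv _ /(of_code2_inj Vu Vv).
by rewrite of_code2_adj.
Qed.

Lemma code_path_to_mid x y w : code_induced_path x y w -> dvd_code x y = dvd_code w y.
Proof.
case/of_code2_induced_path=> [[Vx Vy Vw] [[xy yw xw] [axy ayw naxw]]].
exact: (induced_path_to_mid f_inj f_adj Vx Vy Vw xy yw xw axy ayw naxw).
Qed.

Lemma code_path_from_mid x y w : code_induced_path x y w -> dvd_code y x = dvd_code y w.
Proof.
case/of_code2_induced_path=> [[Vx Vy Vw] [[xy yw xw] [axy ayw naxw]]].
exact: (induced_path_from_mid f_inj f_adj Vx Vy Vw xy yw xw axy ayw naxw).
Qed.

(* Writing a, b, c, d, e, g, s for the codes (0,1), (0,2), (1,0), (1,2),
   (2,0), (2,1), (2,2), the orientation of the edge ab is carried along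
   ad, ed, gd, gb, gc, ec, sc, sa to the edge ba. *)
Lemma no_divisor_labelling : False.
Proof.
have := @code_edge_asym (0, 1) (0, 2) isT isT isT.
rewrite (@code_path_from_mid (0, 2) (0, 1) (1, 2) isT).
rewrite (@code_path_to_mid (0, 1) (1, 2) (2, 0) isT).
rewrite (@code_path_to_mid (2, 0) (1, 2) (2, 1) isT).
rewrite (@code_path_from_mid (1, 2) (2, 1) (0, 2) isT).
rewrite (@code_path_from_mid (0, 2) (2, 1) (1, 0) isT).
rewrite (@code_path_to_mid (2, 1) (1, 0) (2, 0) isT).
rewrite (@code_path_to_mid (2, 0) (1, 0) (2, 2) isT).
rewrite (@code_path_from_mid (1, 0) (2, 2) (0, 1) isT).
rewrite (@code_path_to_mid (2, 2) (0, 1) (0, 2) isT).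
by case: (dvd_code (0, 2) (0, 1)).
Qed.

End Labelling.

Lemma compl_zdg_not_divisor_graph :
  ~ divisor_graph (@zdg_vertex (R1 * R2)%type) (@zdg_compl_adj (R1 * R2)%type).
Proof. by case=> _ [f [f_inj [_ f_adj]]]; apply: no_divisor_labelling f_inj f_adj. Qed.

End TwoSquareZeroFactors.

Section DomainTimesDiam0.
Variables (R1 R2 : finComNzRingType).
Hypotheses (dom1 : integral_domain R1) (diam0_2 : zdg_diam0 R2).

Local Notation N := (#|R1| + #|R2|)%N.

Let rank_lt1 (a : R1) : (enum_rank a < #|R1|)%N := ltn_ord _.
Let rank_lt2 (b : R2) : (enum_rank b < #|R2|)%N := ltn_ord _.

Definition label_exp (x : R1 * R2) : nat * nat :=
  if x.1 == 0 then (0%N, if zdivb x.2 then N.+1 else (enum_rank x.2).+1)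
  else if x.2 == 0 then ((enum_rank x.1).+1, 0%N) else (N + enum_rank x.1, N)%N.

Variant vertex_kind (a : R1) (b : R2) : bool -> bool -> bool -> nat * nat -> Prop :=
  | KindA0 of b = 0 : vertex_kind a b false true false ((enum_rank a).+1, 0%N)
  | KindAZ of zdivb b : vertex_kind a b false false true (N + enum_rank a, N)%N
  | Kind0B of a = 0 : vertex_kind a b true false false (0%N, (enum_rank b).+1)
  | Kind0Z of a = 0 & zdivb b : vertex_kind a b true false true (0%N, N.+1).

Lemma vertex_kindP a b : zdg_vertex (a, b) ->
  vertex_kind a b (a == 0) (b == 0) (zdivb b) (label_exp (a, b)).
Proof.
case=> [[[c d] [cd_neq0 abcd0]] ab_neq0]; rewrite /label_exp /=.
have [a0 | a_neq0] := eqVneq a 0.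
  have b_neq0 : b != 0 by move: ab_neq0; rewrite a0 pair_neq0 eqxx.
  rewrite (negbTE b_neq0).
  by case: (boolP (zdivb b)) => zb; constructor.
have [-> | b_neq0] := eqVneq b 0.
  rewrite /zdivb eqxx; exact: KindA0.
have [ac0 bd0] : a * c = 0 /\ b * d = 0 by case: abcd0.
have c0 : c = 0 by case: (dom1 ac0) => // a0; rewrite a0 eqxx in a_neq0.
have zb : zdivb b.
  by apply/zdivbP; split=> //; exists d; move: cd_neq0; rewrite c0 pair_neq0 eqxx.
by rewrite zb; constructor.
Qed.

Lemma label_exp_inj x y : zdg_vertex x -> zdg_vertex y ->
  label_exp x = label_exp y -> x = y.
Proof.
case: x y => a b [c d] Vab Vcd /eqP.
move: (rank_lt1 a) (rank_lt2 b) (rank_lt1 c) (rank_lt2 d) => ra rb rc rd.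
case: (vertex_kindP Vab) => [b0 | zb | a0 | a0 zb];
case: (vertex_kindP Vcd) => [d0 | zd | c0 | c0 zd];
rewrite xpair_eqE => /andP[/eqP e1 /eqP e2]; try lia.
- by move: e1 => /succn_inj/ord_inj/enum_rank_inj ->; rewrite b0 d0.
- move: e1 => /addnI/ord_inj/enum_rank_inj ->.
  by rewrite (diam0_zdivb_eq diam0_2 zb zd).
- by move: e2 => /succn_inj/ord_inj/enum_rank_inj ->; rewrite a0 c0.
- by rewrite a0 c0 (diam0_zdivb_eq diam0_2 zb zd).
Qed.

Lemma label_exp_adj x y : zdg_vertex x -> zdg_vertex y -> x <> y ->
  zdg_compl_adj x y <->
  ((pow23 (label_exp x) %| pow23 (label_exp y)) ||
   (pow23 (label_exp y) %| pow23 (label_exp x)))%N.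
Proof.
case: x y => a b [c d] Vab Vcd xy.
move: (rank_lt1 a) (rank_lt2 b) (rank_lt1 c) (rank_lt2 d) => ra rb rc rd.
rewrite zdg_compl_adjE pair_mul_neq0 (domain_mul_eq0 _ _ dom1) (diam0_mul_eq0 diam0_2).
have -> : ((a, b) != (c, d)) = true by apply/eqP.
case: (vertex_kindP Vab) => [b0 | zb | a0 | a0 zb];
case: (vertex_kindP Vcd) => [d0 | zd | c0 | c0 zd];
rewrite !dvdn_pow23; try by split=> ?; lia.
by case: xy; rewrite a0 c0 (diam0_zdivb_eq diam0_2 zb zd).
Qed.

Lemma compl_zdg_divisor_graph :
  divisor_graph (@zdg_vertex (R1 * R2)%type) (@zdg_compl_adj (R1 * R2)%type).
Proof.
split; first by exists (1, 0); apply: zdg_vertex_10.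
exists (pow23 \o label_exp); split; [|split].
- by move=> x y Vx Vy /pow23_inj; apply: label_exp_inj.
- by move=> x _; apply: pow23_gt0.
- exact: label_exp_adj.
Qed.

End DomainTimesDiam0.

Theorem theorem2p2 (R1 R2 : finComNzRingType) :
  principal_ideal_ring R1 -> principal_ideal_ring R2 ->
  zdg_diam0 R1 -> zdg_diam0 R2 ->
  (divisor_graph (@zdg_vertex (R1 * R2)%type) (@zdg_compl_adj (R1 * R2)%type)
   <-> integral_domain R1 \/ integral_domain R2).
Proof.
move=> _ _ diam0_1 diam0_2; split=> [dg | [dom1 | dom2]].
- have [dom1 | [z1 z1_neq0 z1_sq]] := diam0_domain_or_sqr0 diam0_1; first by left.
  have [dom2 | [z2 z2_neq0 z2_sq]] := diam0_domain_or_sqr0 diam0_2; first by right.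
  by case: (compl_zdg_not_divisor_graph z1_neq0 z1_sq z2_neq0 z2_sq).
- exact: compl_zdg_divisor_graph.
- exact/divisor_graph_swap/compl_zdg_divisor_graph.
Qed.
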